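(* Let $K$ be a finite simplicial complex. If $\gamma\colon C_*(K)\to C_*(\mathbb{R}^d)$ is a homological almost-embedding, then there is a nontrivial equivariant chain map $\tilde{\gamma}\colon C_*(\widetilde{K})\to C_*(\mathbb{S}^{d-1})$.
   Context: Coefficients are $\mathbb{Z}_2$. $C_*(K)$ is the simplicial chain complex, $C_*(\mathbb{R}^d)$ and $C_*(\mathbb{S}^{d-1})$ are singular chain complexes. A chain map is nontrivial if each vertex (0-cell) is sent to a $0$-chain consisting of an odd number of points. A homological almost-embedding of $K$ in $\mathbb{R}^d$ is a nontrivial chain map $C_*(K)\to C_*(\mathbb{R}^d)$ sending disjoint simplices of $K$ to chains with disjoint supports (support = union of images of singular simplices with nonzero coefficient). The deleted product $\widetilde{K}$ is the polyhedral subcomplex of $K\times K$ consisting of cells $\sigma\times\tau$ with $\sigma\cap\tau=\emptyset$, with the free cellular $\mathbb{Z}_2$-action $(x,y)\mapsto(y,x)$; $C_*(\widetilde{K})$ denotes its cellular chain complex. $\mathbb{S}^{d-1}$ carries the antipodal action; equivariance means commuting with the induced actions on chains. *)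

From HB Require Import structures.
From mathcomp Require Import all_boot all_order all_algebra.
From mathcomp Require Import all_classical all_reals all_analysis.
Set Implicit Arguments. Unset Strict Implicit. Unset Printing Implicit Defensive.
Import Order.TTheory GRing.Theory Num.Theory.
Import numFieldNormedType.Exports.
Local Open Scope classical_set_scope.
Local Open Scope ring_scope.

Definition stdsimplex (R : realType) (n : nat) : set 'rV[R]_n.+1 :=
  [set x | (forall i, 0 <= x 0 i) /\ \sum_i x 0 i = 1].
Arguments stdsimplex : clear implicits.

(* j-th coordinate of a row vector (0 if out of range) *)
Definition vcoord (R : realType) n (x : 'rV[R]_n) (j : nat) : R :=
  match @insub nat (fun k => k < n)%N 'I_n j with Some k => x 0 k | None => 0 end.

Definition vresize (R : realType) n m (x : 'rV[R]_n) : 'rV[R]_m :=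
  \row_(j < m) vcoord x j.
Arguments vresize {R n m} x.

Definition face_map (R : realType) n m (i : nat) (x : 'rV[R]_n) : 'rV[R]_m :=
  \row_(j < m) (if (j < i)%N then vcoord x j
                else if j == i :> nat then 0 else vcoord x j.-1).
Arguments face_map {R n m} i x.

(* To make equality of singular simplices
   literal, the map is normalised to be 0 off the standard simplex. *)
Record Sing (R : realType) (d : nat) (X : set 'rV[R]_d) := MkSing {
  sdim : nat;
  sfun : 'rV[R]_(sdim.+1) -> 'rV[R]_d;
  scont : {within stdsimplex R sdim, continuous sfun};
  sinX : sfun @` stdsimplex R sdim `<=` X;
  sout : forall x, ~ stdsimplex R sdim x -> sfun x = 0 }.
Arguments sdim {R d X}.
Arguments sfun {R d X} s _.

(* A Z_2-chain is represented by a finite list of singular simplices;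
   the coefficient of tau is the parity of its multiplicity. *)
Definition mult (R : realType) d (X : set 'rV[R]_d) (c : seq (Sing X))
  (tau : Sing X) : nat := count (fun s => `[< s = tau >]) c.

Definition chain_eq (R : realType) d (X : set 'rV[R]_d) (c1 c2 : seq (Sing X)) :=
  forall tau, odd (mult c1 tau) = odd (mult c2 tau).

Definition homogeneous (R : realType) d (X : set 'rV[R]_d) (n : nat)
  (c : seq (Sing X)) := all (fun s => sdim s == n) c.

Definition is_face (R : realType) d (X : set 'rV[R]_d) (i : nat)
  (tau sigma : Sing X) : Prop :=
  sdim sigma = (sdim tau).+1 /\
  forall x, stdsimplex R (sdim tau) x -> sfun tau x = sfun sigma (face_map i x).

Definition bdmult (R : realType) d (X : set 'rV[R]_d) (c : seq (Sing X))
  (tau : Sing X) : nat :=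
  (\sum_(s <- c) \sum_(i < (sdim s).+1) `[< is_face i tau s >])%N.

Definition bd_eq (R : realType) d (X : set 'rV[R]_d) (c c' : seq (Sing X)) :=
  forall tau, odd (bdmult c tau) = odd (mult c' tau).

Definition support (R : realType) d (X : set 'rV[R]_d) (c : seq (Sing X))
  : set 'rV[R]_d :=
  [set y | exists s, odd (mult c s) /\ (sfun s @` stdsimplex R (sdim s)) y].

Definition odd_points (R : realType) d (X : set 'rV[R]_d) (c : seq (Sing X)) :=
  odd (size c).

Definition is_antipode (R : realType) d (X : set 'rV[R]_d) (alpha rho : Sing X) :=
  sdim alpha = sdim rho /\ forall x, sfun rho x = - sfun alpha (vresize x).

Definition antipode_mult (R : realType) d (X : set 'rV[R]_d) (c : seq (Sing X))
  (rho : Sing X) : nat := count (fun a => `[< is_antipode a rho >]) c.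

Definition Rspace (R : realType) (d : nat) : set 'rV[R]_d := setT.
Definition sphere (R : realType) (d : nat) : set 'rV[R]_d :=
  [set x | \sum_i x 0 i ^+ 2 = 1].
Arguments Rspace : clear implicits.
Arguments sphere : clear implicits.

Definition simplicial_complex (V : finType) (K : {set {set V}}) :=
  (forall s, s \in K -> s != finset.set0) /\
  (forall s t : {set V}, s \in K -> t \subset s -> t != finset.set0 -> t \in K).

Definition simp_dim (V : finType) (s : {set V}) := #|s|.-1.

Definition sfacets (V : finType) (s : {set V}) : seq {set V} :=
  if (1 < #|s|)%N then [seq s :\ v | v <- enum s] else [::].

Definition simp_chain_map (R : realType) d (X : set 'rV[R]_d) (V : finType)
  (K : {set {set V}}) (g : {set V} -> seq (Sing X)) :=
  forall s, s \in K ->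
    homogeneous (simp_dim s) (g s) /\
    bd_eq (g s) (flatten [seq g t | t <- sfacets s]).

Definition homological_almost_embedding (R : realType) d (V : finType)
  (K : {set {set V}}) (g : {set V} -> seq (Sing (Rspace R d))) :=
  simp_chain_map K g /\
  (forall v, (finset.set1 v) \in K -> odd_points (g (finset.set1 v))) /\
  (forall s t, s \in K -> t \in K -> (s :&: t == finset.set0) ->
     support (g s) `&` support (g t) = set0).

(* cells of the deleted product: s x t with s, t disjoint simplices *)
Definition dcell (V : finType) (K : {set {set V}}) (s t : {set V}) :=
  [/\ s \in K, t \in K & (s :&: t == finset.set0)].

Definition dfacets (V : finType) (s t : {set V}) : seq ({set V} * {set V}) :=
  [seq (f, t) | f <- sfacets s] ++ [seq (s, f) | f <- sfacets t].

Definition nontrivial_equivariant_dchain_map (R : realType) d (V : finType)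
  (K : {set {set V}}) (g : {set V} -> {set V} -> seq (Sing (sphere R d))) :=
  (forall s t, dcell K s t ->
     homogeneous (simp_dim s + simp_dim t) (g s t) /\
     bd_eq (g s t) (flatten [seq g p.1 p.2 | p <- dfacets s t])) /\
  (forall v w, dcell K (finset.set1 v) (finset.set1 w) -> odd_points (g (finset.set1 v) (finset.set1 w))) /\
  (forall s t, dcell K s t ->
     forall rho, odd (mult (g t s) rho) = odd (antipode_mult (g s t) rho)).

(* If sigma : Delta^p -> R^d and tau : Delta^q -> R^d have disjoint images,
   then (x, y) |-> (sigma x - tau y) / |sigma x - tau y| maps the prism
   Delta^p x Delta^q to S^(d-1); triangulating the prism by its staircase
   simplices, one for each monotone lattice path from (0, 0) to (p, q), turns
   this map into a singular (p + q)-chain of the sphere.  gamma~(s x t) is the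
   sum of these chains over all pairs of simplices of gamma(s) and gamma(t);
   modulo 2 only the pairs with odd coefficients count, and those have
   disjoint images because gamma is an almost-embedding.
   Modulo 2, the boundary of the staircase triangulation of Delta^p x Delta^q
   is the staircase triangulation of (bd Delta^p) x Delta^q +
   Delta^p x (bd Delta^q), the interior faces cancelling in pairs: this makes
   gamma~ a chain map.  Exchanging the factors changes the sign of
   sigma x - tau y, which gives equivariance, and for two vertices v, w the
   chain has one point for each pair of points of gamma(v) and gamma(w), an
   odd number of points. *)

From Pilot Require Import Defs.
From HB Require Import structures.
From mathcomp Require Import all_boot all_order all_algebra.
From mathcomp Require Import all_classical all_reals all_analysis.
Set Implicit Arguments. Unset Strict Implicit. Unset Printing Implicit Defensive.
Import Order.TTheory GRing.Theory Num.Theory.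
Import numFieldNormedType.Exports.

(* mathcomp-analysis also has an [sfun] (simple functions). *)
Local Notation sfun := Pilot.Defs.sfun.

Section ParityEq.
Variable T : eqType.
Implicit Types X Y U : seq T.

Definition parity_eq X Y := forall x, odd (count_mem x X) = odd (count_mem x Y).

Lemma parity_eq_refl X : parity_eq X X. Proof. by []. Qed.

Lemma parity_eq_trans X Y Z : parity_eq X Y -> parity_eq Y Z -> parity_eq X Z.
Proof. by move=> eXY eYZ x; rewrite eXY eYZ. Qed.

Lemma parity_eq_cat X X' Y Y' :
  parity_eq X X' -> parity_eq Y Y' -> parity_eq (X ++ Y) (X' ++ Y').
Proof. by move=> eX eY x; rewrite !count_cat !oddD eX eY. Qed.

Lemma perm_parity_eq X Y : perm_eq X Y -> parity_eq X Y.
Proof. by move=> /permP eXY x; rewrite eXY. Qed.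

Lemma count_sum (P : pred T) X : count P X = \sum_(x <- X) P x.
Proof. by rewrite -sumn_count sumnE big_map. Qed.

Lemma odd_sum_congr U (f g : T -> nat) :
  {in U, forall u, odd (f u) = odd (g u)} ->
  odd (\sum_(u <- U) f u) = odd (\sum_(u <- U) g u).
Proof.
elim: U => [|a U IH] fg; first by rewrite !big_nil.
rewrite !big_cons !oddD fg ?mem_head // IH // => u uU.
by apply: fg; rewrite inE uU orbT.
Qed.

Lemma big_count_mem U X (g : T -> nat) : uniq U -> {subset X <= U} ->
  \sum_(x <- X) g x = \sum_(u <- U) count_mem u X * g u.
Proof.
move=> uU; elim: X => [|a X IH] sXU.
  by rewrite big_nil big1 // => u _; rewrite mul0n.
rewrite big_cons IH; last by move=> x xX; apply: sXU; rewrite inE xX orbT.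
have aU : a \in U by apply: sXU; rewrite mem_head.
rewrite (bigD1_seq a) //= (bigD1_seq a aU uU) /= eqxx add1n mulSn -addnA.
congr (_ + (_ + _)); apply: eq_bigr => u ua.
by rewrite eq_sym (negbTE ua) add0n.
Qed.

Lemma parity_eq_sum X Y (g : T -> nat) : parity_eq X Y ->
  odd (\sum_(x <- X) g x) = odd (\sum_(x <- Y) g x).
Proof.
move=> eXY; set U := undup (X ++ Y).
rewrite (@big_count_mem U X) ?undup_uniq //; last first.
  by move=> x xX; rewrite mem_undup mem_cat xX.
rewrite (@big_count_mem U Y) ?undup_uniq //; last first.
  by move=> x xY; rewrite mem_undup mem_cat xY orbT.
by apply: odd_sum_congr => u _; rewrite !oddM eXY.
Qed.

Lemma odd_sum_odd_count X (g : T -> nat) :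
  odd (\sum_(x <- X) g x) =
  odd (\sum_(x <- X) (if odd (count_mem x X) then g x else 0)).
Proof.
have sX : {subset X <= undup X} by move=> x; rewrite mem_undup.
rewrite !(@big_count_mem (undup X) X) ?undup_uniq //.
by apply: odd_sum_congr => u _; rewrite !oddM; case: (odd _).
Qed.

End ParityEq.

Lemma parity_eq_map (T U : eqType) (f : T -> U) X Y :
  parity_eq X Y -> parity_eq (map f X) (map f Y).
Proof. by move=> eXY y; rewrite !count_map !count_sum; apply: parity_eq_sum. Qed.

Lemma odd_sum2_odd_count (T U : eqType) (A : seq T) (B : seq U) (F G : T -> U -> nat) :
  (forall a b, a \in A -> b \in B -> odd (count_mem a A) -> odd (count_mem b B) ->
     odd (F a b) = odd (G a b)) ->
  odd (\sum_(a <- A) \sum_(b <- B) F a b) = odd (\sum_(a <- A) \sum_(b <- B) G a b).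
Proof.
move=> FG; rewrite odd_sum_odd_count [RHS]odd_sum_odd_count.
apply: odd_sum_congr => a aA; case: ifP => // oa.
rewrite odd_sum_odd_count [RHS]odd_sum_odd_count.
by apply: odd_sum_congr => b bB; case: ifP => // ob; apply: FG.
Qed.

(** * The staircase triangulation of a prism *)

Local Notation point := (nat * nat)%type.

Definition shiftA (v : point) : point := (v.1.+1, v.2).
Definition shiftB (v : point) : point := (v.1, v.2.+1).
Definition stepA (L : seq point) : seq point := (0, 0) :: map shiftA L.
Definition stepB (L : seq point) : seq point := (0, 0) :: map shiftB L.
Definition bumpA j (v : point) : point := (bump j v.1, v.2).
Definition bumpB j (v : point) : point := (v.1, bump j v.2).

(* The monotone lattice paths from (0, 0) to (p, q), as lists of vertices of
   the grid [0, p] x [0, q]; the path with vertices (a_k, b_k) is the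
   simplex of Delta^p x Delta^q spanned by the points (e_(a_k), e_(b_k)). *)
Fixpoint lattice_paths p : nat -> seq (seq point) := fix paths q :=
  match p, q with
  | 0, 0 => [:: [:: (0, 0)]]
  | p'.+1, 0 => map stepA (lattice_paths p' 0)
  | 0, q'.+1 => map stepB (paths q')
  | p'.+1, q'.+1 => map stepA (lattice_paths p' q'.+1) ++ map stepB (paths q')
  end.

Definition in_grid p q (M : seq point) := all (fun v : point => (v.1 <= p) && (v.2 <= q)) M.

Definition drop_at i (L : seq point) := take i L ++ drop i.+1 L.
Definition facets (L : seq point) := [seq drop_at i L | i <- iota 0 (size L)].
Definition boundary (X : seq (seq point)) := flatten (map facets X).

Definition bigcat n (F : nat -> seq (seq point)) := flatten [seq F j | j <- iota 0 n].
Definition faceA j (X : seq (seq point)) := map (map (bumpA j)) X.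
Definition faceB j (X : seq (seq point)) := map (map (bumpB j)) X.

(* The triangulations of (bd Delta^p) x Delta^q and Delta^p x (bd Delta^q)
   induced by the staircase triangulations of the facets. *)
Definition prism_bdA p q :=
  if p is p'.+1 then bigcat p.+1 (fun j => faceA j (lattice_paths p' q)) else [::].
Definition prism_bdB p q :=
  if q is q'.+1 then bigcat q.+1 (fun j => faceB j (lattice_paths p q')) else [::].
Definition prism_bd p q := prism_bdA p q ++ prism_bdB p q.

Arguments lattice_paths : simpl never.
Arguments drop_at : simpl never.
Arguments facets : simpl never.
Arguments boundary : simpl never.
Arguments bigcat : simpl never.

Lemma lattice_pathsE p q : 0 < p + q ->
  lattice_paths p q =
  (if p is p'.+1 then map stepA (lattice_paths p' q) else [::]) ++
  (if q is q'.+1 then map stepB (lattice_paths p q') else [::]).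
Proof. by case: p => [|p]; case: q => [|q] //=; rewrite cats0. Qed.

Lemma lattice_path_shape p q M : M \in lattice_paths p q ->
  size M = (p + q).+1 /\ in_grid p q M.
Proof.
elim: p q M => [|p IHp] q; elim: q => [|q IHq] M; first by rewrite inE => /eqP ->.
all: rewrite lattice_pathsE // mem_cat => /orP [] //= /mapP [L LS ->] /=.
all: rewrite size_map ?addnS; first [have [-> aL] := IHp _ _ LS | have [-> aL] := IHq _ LS].
all: split; first by rewrite ?addSn ?addnS.
all: rewrite /in_grid in aL *; apply/allP => v /mapP [w wL ->] /=.
all: by move/allP: aL => /(_ w wL) /andP [le1 le2]; rewrite ?ltnS le1 le2 ?leqW.
Qed.

Lemma lattice_paths_swap p q :
  perm_eq (lattice_paths q p) (map (map swap_pair) (lattice_paths p q)).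
Proof.
have swapA X : map (map swap_pair) (map stepA X) = map stepB (map (map swap_pair) X).
  rewrite -!map_comp; apply: eq_map => L /=.
  by rewrite /stepA /stepB /= -!map_comp; congr (_ :: _); apply: eq_map => -[].
have swapB X : map (map swap_pair) (map stepB X) = map stepA (map (map swap_pair) X).
  rewrite -!map_comp; apply: eq_map => L /=.
  by rewrite /stepA /stepB /= -!map_comp; congr (_ :: _); apply: eq_map => -[].
elim: p q => [|p IHp] q; elim: q => [|q IHq] //.
- rewrite (lattice_pathsE (isT : 0 < q.+1 + 0)) (lattice_pathsE (isT : 0 < 0 + q.+1)).
  by rewrite /= cats0 swapB; apply: perm_map.
- rewrite (lattice_pathsE (isT : 0 < 0 + p.+1)) (lattice_pathsE (isT : 0 < p.+1 + 0)).
  by rewrite /= cats0 swapA; apply: perm_map.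
rewrite (lattice_pathsE (isT : 0 < q.+1 + p.+1)) (lattice_pathsE (isT : 0 < p.+1 + q.+1)).
by rewrite /= map_cat swapA swapB perm_catC; apply: perm_cat; apply: perm_map.
Qed.

Lemma facets_cons x L : facets (x :: L) = L :: map (cons x) (facets L).
Proof.
rewrite /facets /= -(addn0 1) iotaDl -map_comp; congr (_ :: _).
  by rewrite /drop_at /= drop0.
by rewrite -map_comp; apply: eq_map => i /=; rewrite /drop_at.
Qed.

Lemma facets_map (f : point -> point) L : facets (map f L) = map (map f) (facets L).
Proof.
rewrite /facets size_map -map_comp; apply: eq_map => i /=.
by rewrite /drop_at map_cat map_take map_drop.
Qed.

Lemma boundary_cons L X : boundary (L :: X) = facets L ++ boundary X.
Proof. by []. Qed.

Lemma boundary_cat X Y : boundary (X ++ Y) = boundary X ++ boundary Y.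
Proof. by rewrite /boundary map_cat flatten_cat. Qed.

Lemma boundary_cone x (f : point -> point) X :
  perm_eq (boundary (map (fun L => x :: map f L) X))
          (map (map f) X ++ map (fun L => x :: map f L) (boundary X)).
Proof.
elim: X => [|L X IH] //=.
rewrite !boundary_cons facets_cons facets_map -map_comp map_cat cat_cons perm_cons.
rewrite -(perm_cat2l [seq x :: map f L0 | L0 <- facets L]) in IH.
by rewrite (permPl IH) perm_catCA.
Qed.

Lemma bigcatS n F : bigcat n.+1 F = F 0 ++ bigcat n (fun j => F j.+1).
Proof. by rewrite /bigcat /= -(addn0 1) iotaDl -map_comp. Qed.

Lemma bigcat_nil n : bigcat n (fun _ => [::]) = [::].
Proof. by rewrite /bigcat; elim: (iota 0 n). Qed.

Lemma map_bigcat (g : seq point -> seq point) n F :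
  map g (bigcat n F) = bigcat n (fun j => map g (F j)).
Proof. by rewrite /bigcat map_flatten -map_comp. Qed.

Lemma perm_bigcat_cat n F G :
  perm_eq (bigcat n (fun j => F j ++ G j)) (bigcat n F ++ bigcat n G).
Proof.
rewrite /bigcat; elim: (iota 0 n) => [|a s IH] //=.
by rewrite -!catA perm_cat2l perm_sym perm_catCA perm_cat2l perm_sym.
Qed.

Lemma eq_bigcat n F G : (forall j, F j = G j) -> bigcat n F = bigcat n G.
Proof. by move=> FG; rewrite /bigcat; congr flatten; apply: eq_map. Qed.

Lemma faceA0 X : faceA 0 X = map (map shiftA) X.
Proof. by []. Qed.

Lemma faceB0 X : faceB 0 X = map (map shiftB) X.
Proof. by []. Qed.

Lemma faceA_cat j X Y : faceA j (X ++ Y) = faceA j X ++ faceA j Y.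
Proof. exact: map_cat. Qed.

Lemma faceB_cat j X Y : faceB j (X ++ Y) = faceB j X ++ faceB j Y.
Proof. exact: map_cat. Qed.

Lemma faceA_stepA j X : faceA j.+1 (map stepA X) = map stepA (faceA j X).
Proof.
rewrite /faceA -!map_comp; apply: eq_map => L /=.
rewrite /stepA /= -!map_comp; congr (_ :: _); apply: eq_map => v /=.
by rewrite /shiftA /bumpA /= bumpS.
Qed.

Lemma faceA_stepB j X : faceA j.+1 (map stepB X) = map stepB (faceA j.+1 X).
Proof.
rewrite /faceA -!map_comp; apply: eq_map => L /=.
by rewrite /stepB /= -!map_comp.
Qed.

Lemma faceB_stepB j X : faceB j.+1 (map stepB X) = map stepB (faceB j X).
Proof.
rewrite /faceB -!map_comp; apply: eq_map => L /=.
rewrite /stepB /= -!map_comp; congr (_ :: _); apply: eq_map => v /=.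
by rewrite /shiftB /bumpB /= bumpS.
Qed.

Lemma faceB_stepA j X : faceB j.+1 (map stepA X) = map stepA (faceB j.+1 X).
Proof.
rewrite /faceB -!map_comp; apply: eq_map => L /=.
by rewrite /stepA /= -!map_comp.
Qed.

Lemma stepA_shiftB X : map stepA (map (map shiftB) X) = map stepB (map (map shiftA) X).
Proof.
rewrite -!map_comp; apply: eq_map => L /=; rewrite /stepA /stepB -!map_comp.
by congr (_ :: _); apply: eq_map.
Qed.

(* Interior faces of the staircase triangulation of Delta^(p+1) x Delta^(q+1):
   each is a facet of two staircase simplices, so they cancel modulo 2. *)
Definition crossA p q :=
  bigcat q.+1 (fun j => map stepA (faceB j.+1 (lattice_paths p q))).
Definition crossB p q :=
  bigcat p.+1 (fun j => map stepB (faceA j.+1 (lattice_paths p q))).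

Lemma prism_bdA_split p q : 0 < p + q ->
  perm_eq (prism_bdA p.+1 q)
    (map (map shiftA) (lattice_paths p q) ++ map stepA (prism_bdA p q) ++
     (if q is q'.+1 then crossB p q' else [::])).
Proof.
move=> pq; rewrite /prism_bdA bigcatS faceA0 perm_cat2l (lattice_pathsE pq).
under eq_bigcat do rewrite faceA_cat.
apply: perm_trans (perm_bigcat_cat _ _ _) _; apply: perm_cat.
  case: p pq => [|p] _; first by rewrite bigcat_nil.
  by under eq_bigcat do rewrite faceA_stepA; rewrite map_bigcat.
case: q pq => [|q] _; first by rewrite bigcat_nil.
by under eq_bigcat do rewrite faceA_stepB.
Qed.

Lemma prism_bdB_split p q : 0 < p + q ->
  perm_eq (prism_bdB p q.+1)
    (map (map shiftB) (lattice_paths p q) ++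
     (if p is p'.+1 then crossA p' q else [::]) ++ map stepB (prism_bdB p q)).
Proof.
move=> pq; rewrite /prism_bdB bigcatS faceB0 perm_cat2l (lattice_pathsE pq).
under eq_bigcat do rewrite faceB_cat.
apply: perm_trans (perm_bigcat_cat _ _ _) _; apply: perm_cat.
  case: p pq => [|p] _; first by rewrite bigcat_nil.
  by under eq_bigcat do rewrite faceB_stepA.
case: q pq => [|q] _; first by rewrite bigcat_nil.
by under eq_bigcat do rewrite faceB_stepB; rewrite map_bigcat.
Qed.

Lemma boundary_lattice_paths0S q :
  parity_eq (boundary (lattice_paths 0 q.+1)) (prism_bd 0 q.+1).
Proof.
elim: q => [|q IH]; first exact: perm_parity_eq.
rewrite (lattice_pathsE (isT : 0 < 0 + q.+2)) /=.
apply: parity_eq_trans (perm_parity_eq (boundary_cone _ _ _)) _.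
apply: parity_eq_trans (parity_eq_cat (parity_eq_refl _) (parity_eq_map stepB IH)) _.
by apply: perm_parity_eq; rewrite perm_sym (prism_bdB_split (isT : 0 < 0 + q.+1)).
Qed.

Lemma boundary_lattice_pathsS0 p :
  parity_eq (boundary (lattice_paths p.+1 0)) (prism_bd p.+1 0).
Proof.
elim: p => [|p IH]; first exact: perm_parity_eq.
rewrite (lattice_pathsE (isT : 0 < p.+2 + 0)) /= cats0.
apply: parity_eq_trans (perm_parity_eq (boundary_cone _ _ _)) _.
apply: parity_eq_trans (parity_eq_cat (parity_eq_refl _) (parity_eq_map stepA IH)) _.
apply: perm_parity_eq; rewrite perm_sym /prism_bd !cats0.
by have := prism_bdA_split (isT : 0 < p.+1 + 0); rewrite cats0.
Qed.

Lemma prism_bd_step p q :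
  parity_eq ((map (map shiftA) (lattice_paths p q.+1) ++ map stepA (prism_bd p q.+1)) ++
             (map (map shiftB) (lattice_paths p.+1 q) ++ map stepB (prism_bd p.+1 q)))
            (prism_bd p.+1 q.+1).
Proof.
have cancelA : map stepA (prism_bdB p q.+1) =
    map stepB (map (map shiftA) (lattice_paths p q)) ++ crossA p q.
  by rewrite /prism_bdB bigcatS faceB0 map_cat stepA_shiftB map_bigcat.
have cancelB : map stepB (prism_bdA p.+1 q) =
    map stepB (map (map shiftA) (lattice_paths p q)) ++ crossB p q.
  by rewrite /prism_bdA bigcatS faceA0 map_cat map_bigcat.
have splitA := @prism_bdA_split p q.+1 ltac:(by rewrite addnS).
have splitB := @prism_bdB_split p.+1 q ltac:(by rewrite addSn).
rewrite perm_sym in splitA; rewrite perm_sym in splitB.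
have cancel (a b c e x y z : seq (seq point)) :
    parity_eq ((a ++ b ++ z ++ x) ++ c ++ (z ++ y) ++ e) ((a ++ b ++ y) ++ c ++ x ++ e).
  by move=> M; rewrite !count_cat !oddD; do 7 case: (odd (count_mem M _)).
rewrite /prism_bd (map_cat stepA (prism_bdA p q.+1)) (map_cat stepB (prism_bdA p.+1 q)).
rewrite cancelA cancelB.
exact: parity_eq_trans (cancel _ _ _ _ _ _ _) (perm_parity_eq (perm_cat splitA splitB)).
Qed.

Theorem boundary_lattice_paths p q : 0 < p + q ->
  parity_eq (boundary (lattice_paths p q)) (prism_bd p q).
Proof.
elim: p q => [|p IHp] q pq.
  by case: q pq => // q _; apply: boundary_lattice_paths0S.
elim: q pq => [|q IHq] _; first exact: boundary_lattice_pathsS0.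
rewrite (lattice_pathsE (isT : 0 < p.+1 + q.+1)) boundary_cat.
apply: parity_eq_trans (prism_bd_step p q).
apply: parity_eq_cat; apply: parity_eq_trans (perm_parity_eq (boundary_cone _ _ _)) _.
  by apply: parity_eq_cat (parity_eq_refl _) (parity_eq_map _ (IHp _ _)); rewrite addnS.
by apply: parity_eq_cat (parity_eq_refl _) (parity_eq_map _ (IHq _)); rewrite addSn.
Qed.

Local Open Scope classical_set_scope.

Section SimplicialMaps.
Local Open Scope ring_scope.
Variable R : realType.
Local Notation Delta n := (stdsimplex R n).

Lemma cvg_row (T : Type) (F : set_system T) {FF : Filter F} n
    (f : T -> 'rV[R]_n) (l : 'rV[R]_n) :
  (forall j, (fun t => f t 0 j) @ F --> l 0 j) -> f @ F --> l.
Proof.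
move=> fl; apply/cvg_ballP => e e0.
have : \forall t \near F, forall j, ball (l 0 j) e (f t 0 j).
  by apply: filter_forall => j; exact: (cvg_ballP _ _).1 (fl j) e e0.
by apply: filterS => t flt; split => // i j; rewrite (ord1 i); exact: flt.
Qed.

Lemma continuous_within_comp (T U W : topologicalType) (A : set T) (B : set U)
    (h : T -> U) (g : U -> W) x :
  A x -> {for x, continuous h} -> (forall y, A y -> B (h y)) ->
  {within B, continuous g} -> (g \o h) @ within A (nbhs x) --> g (h x).
Proof.
move=> Ax hx hAB gB.
have gBx := (subspace_continuousP B g).1 gB (h x) (hAB x Ax).
apply: (@cvg_comp _ _ _ h g (within A (nbhs x)) (within B (nbhs (h x))) _ _ gBx).
move=> P /= /hx hP; rewrite /within /=.
by move: hP; apply: (@filterS _ (nbhs x)) => z /= hz Az; exact: hz (hAB z Az).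
Qed.

(* The linear map sending the k-th basis vector to the (f k)-th one: on the
   standard simplices it is the simplicial map with vertex map f. *)
Definition pushcoord (f : nat -> nat) m N (x : 'rV[R]_N) : 'rV[R]_m :=
  \row_(j < m) \sum_(k < N) (if f k == j then x 0 k else 0).

Lemma pushcoord_continuous f m N : continuous (@pushcoord f m N).
Proof.
move=> x; apply: (@cvg_row _ (nbhs x) _ m) => j.
under eq_fun do rewrite mxE; rewrite mxE.
apply: (continuous_big add_continuous) => k _.
by case: (f k == j); [exact: coord_continuous | exact: cst_continuous].
Qed.

Lemma eq_pushcoord f g m N (x : 'rV[R]_N) : (forall k, (k < N)%N -> f k = g k) ->
  pushcoord f m x = pushcoord g m x.
Proof. by move=> fg; apply/rowP => j; rewrite !mxE; apply: eq_bigr => k _; rewrite fg. Qed.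

Lemma sum_ord_eq (c : R) m b :
  \sum_(a < m) (if (a : nat) == b then c else 0) = if (b < m)%N then c else 0.
Proof.
case: (ltnP b m) => bm.
  rewrite (bigD1 (Ordinal bm)) //= eqxx big1 ?addr0 // => k /negbTE kb.
  by rewrite -(inj_eq val_inj) /= in kb; rewrite kb.
by rewrite big1 // => k _; case: eqP => // kb; move: (ltn_ord k); rewrite kb ltnNge bm.
Qed.

Lemma vcoordE n (x : 'rV[R]_n) (k : 'I_n) : vcoord x k = x 0 k.
Proof. by rewrite /vcoord insubT //= => kn; congr (x 0 _); exact: val_inj. Qed.

Lemma vcoord_out n (x : 'rV[R]_n) k : (n <= k)%N -> vcoord x k = 0.
Proof. by move=> nk; rewrite /vcoord insubF // ltnNge nk. Qed.

Lemma sum_vcoord n (y : 'rV[R]_n) b :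
  \sum_(k < n) (if (k : nat) == b then y 0 k else 0) = vcoord y b.
Proof.
transitivity (\sum_(k < n) (if (k : nat) == b then vcoord y b else 0)).
  by apply: eq_bigr => k _; case: eqP => // <-; rewrite vcoordE.
by rewrite sum_ord_eq; case: ltnP => // bn; rewrite vcoord_out.
Qed.

Lemma face_mapE i m n (y : 'rV[R]_n) : face_map i y = pushcoord (bump i) m y :> 'rV_m.
Proof.
apply/rowP => c; rewrite !mxE; case: eqP => [ci|/eqP ci].
  rewrite ifF ?ci ?ltnn // big1 // => k _.
  by case: eqP => // /eqP; rewrite eq_sym (negbTE (neq_bump _ _)).
have bumpE k : (bump i k == c) = (k == unbump i c).
  apply/eqP/eqP => [<-|->]; first by rewrite bumpK.
  by rewrite unbumpK // inE eq_sym.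
under eq_bigr do rewrite bumpE.
by rewrite sum_vcoord /unbump; case: ltngtP ci => //= ic _; rewrite ?subn0 ?subn1.
Qed.

Lemma pushcoord_comp f g m m' N (x : 'rV[R]_N) :
  (forall k, (k < N)%N -> (f k < m)%N) ->
  pushcoord g m' (pushcoord f m x) = pushcoord (g \o f) m' x.
Proof.
move=> fm; apply/rowP => c; rewrite !mxE.
under eq_bigr => a _ do rewrite mxE.
have expand a : (if g a == c then \sum_(k < N) (if f k == a then x 0 k else 0) else 0) =
    \sum_(k < N) (if a == f k then (if g (f k) == c then x 0 k else 0) else 0).
  case: eqP => gac.
    by apply: eq_bigr => k _; case: eqP => [->|]; [rewrite gac !eqxx | case: eqP => // ->].
  by rewrite big1 // => k _; case: eqP => // ak; rewrite -ak; case: eqP.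
under eq_bigr => a _ do rewrite expand.
by rewrite exchange_big /=; apply: eq_bigr => k _; rewrite sum_ord_eq fm.
Qed.

Lemma pushcoord_simplex f m n (x : 'rV[R]_n.+1) :
  (forall k, (k < n.+1)%N -> (f k < m.+1)%N) ->
  Delta n x -> Delta m (pushcoord f m.+1 x).
Proof.
move=> fm [x0 x1]; split.
  move=> i; rewrite mxE; apply: sumr_ge0 => k _; case: ifP => // _; exact: x0.
rewrite -x1; under eq_bigr => j _ do rewrite mxE.
rewrite exchange_big /=; apply: eq_bigr => k _.
transitivity (\sum_(a < m.+1) (if (a : nat) == f k then x 0 k else 0)).
  by apply: eq_bigr => a _; rewrite eq_sym.
by rewrite sum_ord_eq fm.
Qed.

Lemma ltn_bump i n k : (k < n)%N -> (bump i k < n.+1)%N.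
Proof. by rewrite /bump; case: (i <= k)%N; rewrite ?add1n ?add0n ltnS // => /ltnW. Qed.

Lemma simplex_face i n (x : 'rV[R]_n.+1) : Delta n x -> Delta n.+1 (face_map i x).
Proof. by move=> Dx; rewrite face_mapE; apply: pushcoord_simplex => // k /ltn_bump. Qed.

End SimplicialMaps.

(** * The Gauss map *)

Section GaussMap.
Local Open Scope ring_scope.
Variable R : realType.

(* [sphere] is the Euclidean unit sphere, whereas the norm of the normed
   space 'rV[R]_d is the sup norm. *)
Definition enorm d (v : 'rV[R]_d) := Num.sqrt (\sum_i v 0 i ^+ 2).
Definition gauss d (v : 'rV[R]_d) := (enorm v)^-1 *: v.

Lemma sumsq_ge0 d (v : 'rV[R]_d) : 0 <= \sum_i v 0 i ^+ 2.
Proof. by apply: sumr_ge0 => i _; exact: sqr_ge0. Qed.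

Lemma enorm_neq0 d (v : 'rV[R]_d) : v != 0 -> enorm v != 0.
Proof.
move=> vn; rewrite /enorm sqrtr_eq0 -ltNge lt_def sumsq_ge0 andbT.
apply/negP => /eqP /psumr_eq0P v0; move/eqP: vn; apply; apply/rowP => i.
by move/eqP: (v0 (fun i _ => sqr_ge0 _) i isT); rewrite mxE expf_eq0 /= => /eqP.
Qed.

Lemma gauss_sphere d (v : 'rV[R]_d) : v != 0 -> sphere R d (gauss v).
Proof.
move=> vn; rewrite /sphere /= /gauss; under eq_bigr do rewrite mxE exprMn.
rewrite -mulr_sumr exprVn /enorm sqr_sqrtr ?sumsq_ge0 // mulVf //.
by have := enorm_neq0 vn; apply: contra => /eqP v0; rewrite /enorm v0 sqrtr0.
Qed.

Lemma gaussN d (v : 'rV[R]_d) : gauss (- v) = - gauss v.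
Proof.
rewrite /gauss; have -> : enorm (- v) = enorm v.
  by rewrite /enorm; congr Num.sqrt; apply: eq_bigr => i _; rewrite mxE sqrrN.
by rewrite scalerN.
Qed.

Lemma enorm_continuous d : continuous (@enorm d).
Proof.
move=> w; apply: (@continuous_comp _ _ _ (fun v : 'rV[R]_d => \sum_i v 0 i ^+ 2) Num.sqrt).
  apply: (continuous_big add_continuous) => i _ y.
  exact: (cvgM (@coord_continuous _ 1 d 0 i y) (@coord_continuous _ 1 d 0 i y)).
exact: sqrt_continuous.
Qed.

Lemma gauss_continuous d (v : 'rV[R]_d) : v != 0 -> {for v, continuous (@gauss d)}.
Proof.
by move=> vn; exact: (cvgZ (cvgV (enorm_neq0 vn) (@enorm_continuous d v)) cvg_id).
Qed.

End GaussMap.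

HB.instance Definition _ (R : realType) d (X : set 'rV[R]_d) := gen_eqMixin (Sing X).

Section SingularFaces.
Local Open Scope ring_scope.
Variable R : realType.
Local Notation Delta n := (stdsimplex R n).

Lemma vresize_id n (x : 'rV[R]_n) : vresize x = x.
Proof. by apply/rowP => j; rewrite mxE vcoordE. Qed.

Lemma simplex_vresize n m (x : 'rV[R]_n.+1) : n = m -> Delta n x -> Delta m (vresize x).
Proof. by move=> nm; subst m; rewrite vresize_id. Qed.

Lemma face_map_vresize n m M j (x : 'rV[R]_n) : n = m ->
  face_map j (vresize x : 'rV[R]_m) = face_map j x :> 'rV[R]_M.
Proof. by move=> nm; subst m; rewrite vresize_id. Qed.

Lemma Sing_eq d (X : set 'rV[R]_d) (s1 s2 : Sing X) : sdim s1 = sdim s2 ->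
  (forall x, Delta (sdim s1) x -> sfun s1 x = sfun s2 (vresize x)) -> s1 = s2.
Proof.
case: s1 s2 => n1 f1 c1 i1 o1 [n2 f2 c2 i2 o2] /= n12; subst n2 => f12.
have f12E : f1 = f2.
  apply: funext => x; case: (pselect (Delta n1 x)) => Dx; last by rewrite o1 // o2.
  by rewrite f12 // vresize_id.
by subst f2; congr MkSing; apply: Prop_irrelevance.
Qed.

Variable d : nat.
Implicit Types (sg tu : Sing (Rspace R d)).

(* When sg is a point this is junk (the constant 0), and [is_face] never
   holds for it. *)
Definition sface_fun sg (j : nat) (y : 'rV[R]_(sdim sg).-1.+1) : 'rV[R]_d :=
  if `[< Delta (sdim sg).-1 y >] && (0 < sdim sg)%N then sfun sg (face_map j y) else 0.
Arguments sface_fun : clear implicits.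

Lemma sface_fun_continuous sg j :
  {within Delta (sdim sg).-1, continuous (sface_fun sg j)}.
Proof.
case: (posnP (sdim sg)) => [sg0|sg_gt0].
  apply: (@subspace_eq_continuous _ _ _ (fun _ => (0 : 'rV[R]_d))).
    by move=> y _; rewrite /from_subspace /sface_fun (_ : (0 < sdim sg)%N = false) ?andbF // sg0.
  exact: cst_continuous.
apply: (@subspace_eq_continuous _ _ _ (sfun sg \o face_map j)).
  move=> y; rewrite inE => Dy; rewrite /from_subspace /sface_fun sg_gt0 andbT.
  by case: (asboolP (Delta _ y)).
apply/subspace_continuousP => x Dx.
apply: (continuous_within_comp (B := Delta (sdim sg))) => //.
- move=> z; rewrite (funext (fun y => @face_mapE R j (sdim sg).+1 _ y)).
  exact: pushcoord_continuous.
- move=> y Dy; rewrite face_mapE; apply: pushcoord_simplex => // k.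
  by rewrite -(prednK sg_gt0) => /ltn_bump.
- exact: (@scont _ _ _ sg).
Qed.
Arguments sface_fun_continuous : clear implicits.

Lemma sface_fun_out sg j y : ~ Delta (sdim sg).-1 y -> sface_fun sg j y = 0.
Proof. by rewrite /sface_fun; case: asboolP. Qed.
Arguments sface_fun_out : clear implicits.

Definition sface sg j : Sing (Rspace R d) :=
  @MkSing R d (Rspace R d) (sdim sg).-1 (sface_fun sg j) (sface_fun_continuous sg j)
    (fun _ _ => I) (@sface_fun_out sg j).

Lemma is_faceP sg ka j : is_face j ka sg <-> (0 < sdim sg)%N /\ ka = sface sg j.
Proof.
split=> [[ka_sg eq_ka]|[sg_gt0 ->]]; last first.
  split; first by rewrite /= prednK.
  by move=> x Dx; rewrite /= /sface_fun sg_gt0 andbT asboolT.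
have sg_gt0 : (0 < sdim sg)%N by rewrite ka_sg.
split => //; apply: Sing_eq => [|x Dx]; first by rewrite /= ka_sg.
have ka_dim : sdim ka = (sdim sg).-1 by rewrite ka_sg.
rewrite eq_ka // /= /sface_fun sg_gt0 andbT asboolT; last exact: simplex_vresize.
by rewrite face_map_vresize // ka_dim.
Qed.

Lemma is_faceE sg ka j : `[< is_face j ka sg >] = (0 < sdim sg)%N && (ka == sface sg j).
Proof.
apply/idP/idP => [/asboolP/is_faceP [-> ->]|/andP [sg_gt0 /eqP ->]]; first by rewrite eqxx.
exact/asboolP/is_faceP.
Qed.

Definition sfaces sg : seq (Sing (Rspace R d)) :=
  if (0 < sdim sg)%N then [seq sface sg j | j <- iota 0 (sdim sg).+1] else [::].

End SingularFaces.

(** * Gauss maps of staircase simplices *)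

Definition coordA (M : seq point) k := (nth (0, 0) M k).1.
Definition coordB (M : seq point) k := (nth (0, 0) M k).2.

Lemma in_grid_coord p q M k : in_grid p q M -> (k < size M)%N ->
  (coordA M k < p.+1)%N /\ (coordB M k < q.+1)%N.
Proof.
by move=> /allP gM kM; have /andP [le1 le2] := gM _ (mem_nth (0, 0) kM); rewrite !ltnS.
Qed.

Lemma in_grid_drop_at p q i M : in_grid p q M -> in_grid p q (drop_at i M).
Proof.
move=> /allP gM; apply/allP => v; rewrite /drop_at mem_cat.
by case/orP => [/mem_take|/mem_drop] /gM.
Qed.

Lemma size_drop_at i (M : seq point) : (i < size M)%N -> size (drop_at i M) = (size M).-1.
Proof.
move=> iM; rewrite /drop_at size_cat size_take iM size_drop.
by case: (size M) iM => // m; rewrite ltnS => im; rewrite subSS addnC subnK.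
Qed.

Lemma nth_drop_at i (M : seq point) k : (i < size M)%N ->
  nth (0, 0) (drop_at i M) k = nth (0, 0) M (bump i k).
Proof.
move=> iM; rewrite /drop_at nth_cat size_take iM.
case: (ltnP k i) => ki; first by rewrite nth_take // /bump leqNgt ki add0n.
by rewrite nth_drop /bump ki add1n addSn subnKC.
Qed.

Lemma nth_swap (M : seq point) k :
  nth (0, 0) (map swap_pair M) k = swap_pair (nth (0, 0) M k).
Proof.
case: (ltnP k (size M)) => kM; first by rewrite (nth_map (0, 0)).
by rewrite !nth_default ?size_map.
Qed.

Section GaussJoin.
Local Open Scope ring_scope.
Variables (R : realType) (d : nat).
Local Notation Delta n := (stdsimplex R n).
Implicit Types (sg tu : Sing (Rspace R d)) (M L : seq point).

(* For a lattice path M this is (x, y) |-> sg x - tu y on the staircase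
   simplex of M, parametrised by Delta^n. *)
Definition join_diff sg tu M n (x : 'rV[R]_n.+1) : 'rV[R]_d :=
  sfun sg (pushcoord (coordA M) (sdim sg).+1 x) - sfun tu (pushcoord (coordB M) (sdim tu).+1 x).
Arguments join_diff : clear implicits.

Definition joinable sg tu M : Prop :=
  [/\ (0 < size M)%N, in_grid (sdim sg) (sdim tu) M &
      forall x, Delta (size M).-1 x -> join_diff sg tu M (size M).-1 x != 0].

Definition gauss_join_fun sg tu M n (x : 'rV[R]_n.+1) : 'rV[R]_d :=
  if `[< Delta n x >] then gauss (join_diff sg tu M n x) else 0.
Arguments gauss_join_fun : clear implicits.

Lemma gauss_join_fun_continuous sg tu M : joinable sg tu M ->
  {within Delta (size M).-1, continuous gauss_join_fun sg tu M (size M).-1}.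
Proof.
move=> [M_gt0 gM nz].
have coordM k : (k < (size M).-1.+1)%N ->
    (coordA M k < (sdim sg).+1)%N /\ (coordB M k < (sdim tu).+1)%N.
  by rewrite prednK //; apply: in_grid_coord.
apply: (@subspace_eq_continuous _ _ _ (@gauss R d \o join_diff sg tu M (size M).-1)).
  by move=> y; rewrite inE => Dy; rewrite /from_subspace /gauss_join_fun asboolT.
apply/subspace_continuousP => x Dx.
apply: continuous_cvg; first exact: gauss_continuous (nz x Dx).
apply: cvgB.
  apply: (continuous_within_comp (B := Delta (sdim sg))) => //.
  - exact: pushcoord_continuous.
  - by move=> y Dy; apply: pushcoord_simplex => // k /coordM [].
  - exact: (@scont _ _ _ sg).
apply: (continuous_within_comp (B := Delta (sdim tu))) => //.
- exact: pushcoord_continuous.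
- by move=> y Dy; apply: pushcoord_simplex => // k /coordM [].
- exact: (@scont _ _ _ tu).
Qed.
Arguments gauss_join_fun_continuous : clear implicits.

Lemma gauss_join_fun_sphere sg tu M : joinable sg tu M ->
  gauss_join_fun sg tu M (size M).-1 @` Delta (size M).-1 `<=` sphere R d.
Proof.
move=> [_ _ nz] _ [x Dx <-]; rewrite /gauss_join_fun asboolT //.
exact: gauss_sphere (nz x Dx).
Qed.
Arguments gauss_join_fun_sphere : clear implicits.

Lemma gauss_join_fun_out sg tu M n x : ~ Delta n x -> gauss_join_fun sg tu M n x = 0.
Proof. by rewrite /gauss_join_fun; case: asboolP. Qed.
Arguments gauss_join_fun_out : clear implicits.

Definition gauss_join sg tu M (G : joinable sg tu M) : Sing (sphere R d) :=
  @MkSing R d (sphere R d) (size M).-1 (gauss_join_fun sg tu M (size M).-1)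
    (gauss_join_fun_continuous sg tu M G) (gauss_join_fun_sphere sg tu M G)
    (gauss_join_fun_out sg tu M (size M).-1).

(* Empty when the staircase simplex of M meets the locus sg = tu; this only
   happens for pairs sg, tu that do not matter modulo 2. *)
Definition join_chain sg tu M : seq (Sing (sphere R d)) :=
  if pselect (joinable sg tu M) is left G then [:: gauss_join G] else [::].

Lemma join_chainE sg tu M (G : joinable sg tu M) : join_chain sg tu M = [:: gauss_join G].
Proof. by rewrite /join_chain; case: pselect => // G'; rewrite (Prop_irrelevance G' G). Qed.

Lemma join_chain_nil sg tu M : ~ joinable sg tu M -> join_chain sg tu M = [::].
Proof. by rewrite /join_chain; case: pselect. Qed.

Lemma count_mem_join_chain sg tu M rho :
  count_mem rho (join_chain sg tu M) = (rho \in join_chain sg tu M).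
Proof. by rewrite /join_chain; case: pselect => G //=; rewrite inE eq_sym addn0. Qed.

Lemma gauss_join_fun_vresize sg tu M n n' (x : 'rV[R]_n.+1) : n = n' ->
  gauss_join_fun sg tu M n' (vresize x) = gauss_join_fun sg tu M n x.
Proof. by move=> nn'; subst n'; rewrite vresize_id. Qed.

Lemma join_diff_face sg tu M i n (x : 'rV[R]_n.+1) : size M = n.+2 -> (i < n.+2)%N ->
  join_diff sg tu M n.+1 (face_map i x) = join_diff sg tu (drop_at i M) n x.
Proof.
move=> sM iM; have bump_lt k : (k < n.+1)%N -> (bump i k < n.+2)%N by apply: ltn_bump.
rewrite /join_diff !face_mapE !pushcoord_comp //.
congr (sfun sg _ - sfun tu _); apply: eq_pushcoord => k kn /=;
  by rewrite /coordA /coordB nth_drop_at // sM.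
Qed.

Lemma gauss_join_fun_face sg tu M i n N (x : 'rV[R]_n.+1) :
  size M = n.+2 -> (i < n.+2)%N -> N = n.+1 -> Delta n x ->
  gauss_join_fun sg tu M N (face_map i x) = gauss_join_fun sg tu (drop_at i M) n x.
Proof.
move=> sM iM NE Dx; subst N.
rewrite /gauss_join_fun asboolT; last exact: simplex_face.
by rewrite asboolT // join_diff_face.
Qed.

Lemma joinable_drop_at sg tu M i : joinable sg tu M -> (1 < size M)%N -> (i < size M)%N ->
  joinable sg tu (drop_at i M).
Proof.
move=> [_ gM nz] M_gt1 iM.
have [n sM] : exists n, size M = n.+2 by case: (size M) M_gt1 => [|[|n]] // _; exists n.
have sd : size (drop_at i M) = n.+1 by rewrite size_drop_at // sM.
split; [by rewrite sd | exact: in_grid_drop_at | rewrite sd /= => x Dx].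
rewrite -join_diff_face // -?sM //.
by move: (nz (face_map i x)); rewrite sM; apply; apply: simplex_face.
Qed.

Lemma is_face_gauss_join sg tu M (G : joinable sg tu M) i rho : (i < size M)%N ->
  is_face i rho (gauss_join G) <-> rho \in join_chain sg tu (drop_at i M).
Proof.
move=> iM; have [M_gt0 _ _] := G.
case: (ltnP 1 (size M)) => [M_gt1|M_le1]; last first.
  have sM1 : size M = 1 by apply/eqP; rewrite eqn_leq M_le1 M_gt0.
  rewrite join_chain_nil => [|[]]; last by rewrite size_drop_at // sM1.
  by split => // [[/= rho_dim _]]; move: rho_dim; rewrite sM1.
have [n sM] : exists n, size M = n.+2 by case: (size M) M_gt1 => [|[|n]] // _; exists n.
have sd : size (drop_at i M) = n.+1 by rewrite size_drop_at // sM.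
rewrite (join_chainE (joinable_drop_at G M_gt1 iM)) inE.
split => [[rho_dim rhoE]|/eqP ->].
  have rho_n : sdim rho = n by move: rho_dim; rewrite /= sM => -[].
  apply/eqP; apply: Sing_eq => [|x Dx]; first by rewrite /= sd.
  rewrite rhoE //= gauss_join_fun_vresize ?sd //.
  by apply: gauss_join_fun_face; rewrite // rho_n ?sM // -sM.
split => [|x Dx /=]; first by rewrite /= sM sd.
by rewrite gauss_join_fun_face ?sM ?sd // -sM.
Qed.

Definition apart sg tu :=
  forall x y, Delta (sdim sg) x -> Delta (sdim tu) y -> sfun sg x != sfun tu y.

Lemma apart_sym sg tu : apart sg tu -> apart tu sg.
Proof. by move=> sg_tu x y Dx Dy; rewrite eq_sym; apply: sg_tu. Qed.

Lemma apart_sfaceA sg tu j : (0 < sdim sg)%N -> apart sg tu -> apart (sface sg j) tu.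
Proof.
move=> sg_gt0 sg_tu x y Dx Dy /=; rewrite /sface_fun sg_gt0 andbT asboolT //.
apply: sg_tu => //; rewrite face_mapE; apply: pushcoord_simplex => // k.
by rewrite -(prednK sg_gt0) => /ltn_bump.
Qed.

Lemma apart_joinable sg tu M : (0 < size M)%N -> in_grid (sdim sg) (sdim tu) M ->
  apart sg tu -> joinable sg tu M.
Proof.
move=> M_gt0 gM sg_tu; split => // x Dx; rewrite /join_diff subr_eq0.
have coordM k : (k < (size M).-1.+1)%N ->
    (coordA M k < (sdim sg).+1)%N /\ (coordB M k < (sdim tu).+1)%N.
  by rewrite prednK //; apply: in_grid_coord.
by apply: sg_tu; apply: pushcoord_simplex => // k /coordM [].
Qed.

Lemma join_diff_swap sg tu M n (x : 'rV[R]_n.+1) :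
  join_diff tu sg (map swap_pair M) n x = - join_diff sg tu M n x.
Proof.
rewrite /join_diff opprB; congr (sfun tu _ - sfun sg _); apply: eq_pushcoord => k _;
  by rewrite /coordA /coordB nth_swap.
Qed.

Lemma gauss_join_fun_swap sg tu M n (x : 'rV[R]_n.+1) :
  gauss_join_fun tu sg (map swap_pair M) n x = - gauss_join_fun sg tu M n x.
Proof.
rewrite /gauss_join_fun; case: asboolP => _; last by rewrite oppr0.
by rewrite join_diff_swap gaussN.
Qed.

Lemma in_grid_swap p q M : in_grid p q M -> in_grid q p (map swap_pair M).
Proof.
by move=> /allP gM; apply/allP => v /mapP [w /gM /andP [le1 le2] ->]; rewrite /= le1 le2.
Qed.

Lemma joinable_swap sg tu M : joinable sg tu M -> joinable tu sg (map swap_pair M).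
Proof.
move=> [M_gt0 gM nz]; split; rewrite ?size_map //; first exact: in_grid_swap.
by move=> x Dx; rewrite join_diff_swap oppr_eq0; apply: nz.
Qed.

Lemma is_antipode_gauss_join sg tu M (G : joinable sg tu M) rho :
  is_antipode (gauss_join G) rho <-> rho \in join_chain tu sg (map swap_pair M).
Proof.
rewrite (join_chainE (joinable_swap G)) inE; split => [[rho_dim rhoE]|/eqP ->].
  apply/eqP; apply: Sing_eq => [|x Dx]; first by rewrite -rho_dim /= size_map.
  rewrite rhoE /= !gauss_join_fun_vresize ?gauss_join_fun_swap //.
  by rewrite -rho_dim /= size_map.
split => [|x /=]; first by rewrite /= size_map.
by rewrite gauss_join_fun_vresize ?gauss_join_fun_swap ?size_map.
Qed.

Lemma apart_sfaceB sg tu j : (0 < sdim tu)%N -> apart sg tu -> apart sg (sface tu j).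
Proof. by move=> tu_gt0 /apart_sym /(apart_sfaceA (j := j) tu_gt0) /apart_sym. Qed.

Lemma in_grid_bumpA p q j L : in_grid p q L -> in_grid p.+1 q (map (bumpA j) L).
Proof.
move=> /allP gL; apply/allP => v /mapP [w /gL /andP [le1 le2] ->].
by rewrite /= le2 andbT -ltnS; apply: ltn_bump.
Qed.

Lemma in_grid_bumpB p q j L : in_grid p q L -> in_grid p q.+1 (map (bumpB j) L).
Proof.
move=> /allP gL; apply/allP => v /mapP [w /gL /andP [le1 le2] ->].
by rewrite /= le1 -ltnS; apply: ltn_bump.
Qed.

Lemma join_diff_bumpA sg tu L j n (x : 'rV[R]_n.+1) : (0 < sdim sg)%N ->
  size L = n.+1 -> in_grid (sdim sg).-1 (sdim tu) L -> Delta n x ->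
  join_diff sg tu (map (bumpA j) L) n x = join_diff (sface sg j) tu L n x.
Proof.
move=> sg_gt0 sL gL Dx; have coordL k : (k < size L)%N -> _ := in_grid_coord (k := k) gL.
rewrite sL in coordL; rewrite /join_diff; congr (_ - _).
  rewrite /= /sface_fun sg_gt0 andbT asboolT; last first.
    by apply: pushcoord_simplex => // k /coordL [].
  rewrite face_mapE pushcoord_comp => [|k /coordL [] //].
  congr (sfun sg _); apply: eq_pushcoord => k kn.
  by rewrite /coordA (nth_map (0, 0)) // sL.
congr (sfun tu _); apply: eq_pushcoord => k kn.
by rewrite /coordB (nth_map (0, 0)) // sL.
Qed.

Lemma join_diff_bumpB sg tu L j n (x : 'rV[R]_n.+1) : (0 < sdim tu)%N ->
  size L = n.+1 -> in_grid (sdim sg) (sdim tu).-1 L -> Delta n x ->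
  join_diff sg tu (map (bumpB j) L) n x = join_diff sg (sface tu j) L n x.
Proof.
move=> tu_gt0 sL gL Dx; have coordL k : (k < size L)%N -> _ := in_grid_coord (k := k) gL.
rewrite sL in coordL; rewrite /join_diff; congr (_ - _).
  congr (sfun sg _); apply: eq_pushcoord => k kn.
  by rewrite /coordA (nth_map (0, 0)) // sL.
rewrite /= /sface_fun tu_gt0 andbT asboolT; last first.
  by apply: pushcoord_simplex => // k /coordL [].
rewrite face_mapE pushcoord_comp => [|k /coordL [] //].
congr (sfun tu _); apply: eq_pushcoord => k kn.
by rewrite /coordB (nth_map (0, 0)) // sL.
Qed.

Lemma join_chain_bumpA sg tu L j : (0 < sdim sg)%N -> (0 < size L)%N ->
  in_grid (sdim sg).-1 (sdim tu) L -> apart sg tu ->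
  join_chain sg tu (map (bumpA j) L) = join_chain (sface sg j) tu L.
Proof.
move=> sg_gt0 L_gt0 gL sg_tu.
have G1 : joinable sg tu (map (bumpA j) L).
  by apply: apart_joinable; rewrite ?size_map // -(prednK sg_gt0); apply: in_grid_bumpA.
have G2 : joinable (sface sg j) tu L by apply: apart_joinable => //; exact: apart_sfaceA.
rewrite (join_chainE G1) (join_chainE G2); congr [:: _].
apply: Sing_eq => [|x Dx]; first by rewrite /= size_map.
rewrite /= gauss_join_fun_vresize ?size_map // /gauss_join_fun.
by case: asboolP => // Dx'; rewrite join_diff_bumpA ?size_map ?prednK.
Qed.

Lemma join_chain_bumpB sg tu L j : (0 < sdim tu)%N -> (0 < size L)%N ->
  in_grid (sdim sg) (sdim tu).-1 L -> apart sg tu ->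
  join_chain sg tu (map (bumpB j) L) = join_chain sg (sface tu j) L.
Proof.
move=> tu_gt0 L_gt0 gL sg_tu.
have G1 : joinable sg tu (map (bumpB j) L).
  by apply: apart_joinable; rewrite ?size_map // -(prednK tu_gt0); apply: in_grid_bumpB.
have G2 : joinable sg (sface tu j) L by apply: apart_joinable => //; exact: apart_sfaceB.
rewrite (join_chainE G1) (join_chainE G2); congr [:: _].
apply: Sing_eq => [|x Dx]; first by rewrite /= size_map.
rewrite /= gauss_join_fun_vresize ?size_map // /gauss_join_fun.
by case: asboolP => // Dx'; rewrite join_diff_bumpB ?size_map ?prednK.
Qed.

End GaussJoin.

(** * The product chain *)

Lemma asbool_eq (T : eqType) (a b : T) : `[< a = b >] = (a == b).
Proof. by case: eqP => [->|ab]; [exact: asboolT | exact: asboolF]. Qed.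

Lemma mult_count_mem (R : realType) d (X : set 'rV[R]_d) (c : seq (Sing X)) t :
  mult c t = count_mem t c.
Proof. by apply: eq_count => s; rewrite asbool_eq. Qed.

Lemma mult_flatten (R : realType) d (X : set 'rV[R]_d) (cs : seq (seq (Sing X))) t :
  mult (flatten cs) t = \sum_(c <- cs) mult c t.
Proof.
rewrite mult_count_mem count_flatten sumnE big_map.
by apply: eq_bigr => c _; rewrite mult_count_mem.
Qed.

Section ProductChain.
Variables (R : realType) (d : nat).
Local Notation Sg := (Sing (Rspace R d)).
Local Notation Ss := (Sing (sphere R d)).
Implicit Types (sg tu ka : Sg) (A B : seq Sg).

Lemma bdmult_sfaces A ka : bdmult A ka = count_mem ka (flatten (map (@sfaces R d) A)).
Proof.
rewrite /bdmult count_flatten sumnE !big_map; apply: eq_bigr => s _.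
under eq_bigr do rewrite is_faceE.
rewrite /sfaces; case: (posnP (sdim s)) => [s0|s_gt0]; first by rewrite big1 // s0.
rewrite count_sum big_map -(big_mkord xpredT (fun j => (ka == sface s j) : nat)).
by rewrite /index_iota subn0; apply: eq_bigr => j _; rewrite eq_sym.
Qed.

Lemma odd_sum_bd_eq A C (F : Sg -> nat) : bd_eq A C ->
  odd (\sum_(ka <- C) F ka) = odd (\sum_(sg <- A) \sum_(ka <- sfaces sg) F ka).
Proof.
move=> bdA; have AC : parity_eq C (flatten (map (@sfaces R d) A)).
  by move=> ka; rewrite -bdmult_sfaces -mult_count_mem bdA.
by rewrite (parity_eq_sum _ AC) big_flatten big_map.
Qed.

Lemma sum_is_face_join_chain sg tu M rho : apart sg tu ->
  M \in lattice_paths (sdim sg) (sdim tu) ->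
  \sum_(x <- join_chain sg tu M) \sum_(i < (sdim x).+1) `[< is_face i rho x >] =
  \sum_(N <- facets M) count_mem rho (join_chain sg tu N).
Proof.
move=> sg_tu /lattice_path_shape [sM gM].
have G : joinable sg tu M by apply: apart_joinable; rewrite ?sM.
rewrite (join_chainE G) big_seq1 /= (prednK (_ : 0 < size M)%N) ?sM //.
rewrite -sM /facets big_map -(big_mkord xpredT (fun i => `[< is_face i rho (gauss_join G) >] : nat)).
rewrite /index_iota subn0 !big_seq; apply: eq_bigr => i; rewrite mem_iota => /andP [_ iM].
rewrite count_mem_join_chain; congr nat_of_bool.
by apply/asboolP/idP => [/(is_face_gauss_join G rho iM).1 | /(is_face_gauss_join G rho iM).2].
Qed.

Lemma sum_prism_bdA sg tu rho : apart sg tu ->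
  \sum_(N <- prism_bdA (sdim sg) (sdim tu)) count_mem rho (join_chain sg tu N) =
  \sum_(ka <- sfaces sg) \sum_(M <- lattice_paths (sdim ka) (sdim tu))
     count_mem rho (join_chain ka tu M).
Proof.
move=> sg_tu; case sgE: (sdim sg) => [|p]; first by rewrite /sfaces sgE !big_nil.
rewrite /sfaces sgE ltn0Sn /prism_bdA /bigcat big_flatten !big_map.
apply: eq_bigr => j _.
rewrite /faceA big_map (_ : sdim (sface sg j) = p) /= ?sgE //.
apply: eq_big_seq => L /lattice_path_shape [sL gL].
by rewrite join_chain_bumpA ?sgE ?sL.
Qed.

Lemma sum_prism_bdB sg tu rho : apart sg tu ->
  \sum_(N <- prism_bdB (sdim sg) (sdim tu)) count_mem rho (join_chain sg tu N) =
  \sum_(ka <- sfaces tu) \sum_(M <- lattice_paths (sdim sg) (sdim ka))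
     count_mem rho (join_chain sg ka M).
Proof.
move=> sg_tu; case tuE: (sdim tu) => [|q]; first by rewrite /sfaces tuE !big_nil.
rewrite /sfaces tuE ltn0Sn /prism_bdB /bigcat big_flatten !big_map.
apply: eq_bigr => j _.
rewrite /faceB big_map (_ : sdim (sface tu j) = q) /= ?tuE //.
apply: eq_big_seq => L /lattice_path_shape [sL gL].
by rewrite join_chain_bumpB ?tuE ?sL ?addnS.
Qed.

Lemma bdmult_join_pair sg tu rho : apart sg tu ->
  odd (\sum_(M <- lattice_paths (sdim sg) (sdim tu)) \sum_(x <- join_chain sg tu M)
          \sum_(i < (sdim x).+1) `[< is_face i rho x >]) =
  odd (\sum_(ka <- sfaces sg) \sum_(M <- lattice_paths (sdim ka) (sdim tu))
          count_mem rho (join_chain ka tu M) +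
       \sum_(ka <- sfaces tu) \sum_(M <- lattice_paths (sdim sg) (sdim ka))
          count_mem rho (join_chain sg ka M)).
Proof.
move=> sg_tu.
rewrite (eq_big_seq _ (fun M => sum_is_face_join_chain rho sg_tu (M := M))).
have -> : \sum_(M <- lattice_paths (sdim sg) (sdim tu)) \sum_(N <- facets M)
      count_mem rho (join_chain sg tu N) =
    \sum_(N <- boundary (lattice_paths (sdim sg) (sdim tu))) count_mem rho (join_chain sg tu N).
  by rewrite /boundary big_flatten big_map.
case: (posnP (sdim sg + sdim tu)) => [|pq].
  move/eqP; rewrite addn_eq0 => /andP [/eqP sg0 /eqP tu0].
  rewrite /sfaces sg0 tu0 /= !big_nil big_seq1 join_chain_nil //.
  by case.
rewrite (parity_eq_sum _ (boundary_lattice_paths pq)) /prism_bd big_cat oddD.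
by rewrite sum_prism_bdA // sum_prism_bdB // oddD.
Qed.

Definition gauss_product A B : seq Ss :=
  flatten [seq flatten [seq flatten [seq join_chain sg tu M
                                      | M <- lattice_paths (sdim sg) (sdim tu)]
                        | tu <- B] | sg <- A].

Lemma big_gauss_product (F : Ss -> nat) A B :
  \sum_(x <- gauss_product A B) F x =
  \sum_(sg <- A) \sum_(tu <- B) \sum_(M <- lattice_paths (sdim sg) (sdim tu))
     \sum_(x <- join_chain sg tu M) F x.
Proof.
rewrite /gauss_product big_flatten big_map; apply: eq_bigr => sg _.
rewrite big_flatten big_map; apply: eq_bigr => tu _.
by rewrite big_flatten big_map.
Qed.

Lemma count_gauss_product A B rho : count_mem rho (gauss_product A B) =
  \sum_(sg <- A) \sum_(tu <- B) \sum_(M <- lattice_paths (sdim sg) (sdim tu))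
     count_mem rho (join_chain sg tu M).
Proof.
rewrite count_sum big_gauss_product; apply: eq_bigr => sg _; apply: eq_bigr => tu _.
by apply: eq_bigr => M _; rewrite count_sum.
Qed.

Definition apart_chains A B :=
  forall sg tu, odd (count_mem sg A) -> odd (count_mem tu B) -> apart sg tu.

Lemma support_apart A B : Pilot.Defs.support A `&` Pilot.Defs.support B = set0 -> apart_chains A B.
Proof.
move=> AB0 sg tu sgA tuB x y Dx Dy; apply/eqP => sgx_tuy.
suff : (Pilot.Defs.support A `&` Pilot.Defs.support B) (sfun sg x) by rewrite AB0.
split; first by exists sg; split; [rewrite mult_count_mem | exists x].
by rewrite sgx_tuy; exists tu; split; [rewrite mult_count_mem | exists y].
Qed.

Lemma gauss_product_homogeneous A B n m :
  homogeneous n A -> homogeneous m B -> homogeneous (n + m) (gauss_product A B).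
Proof.
move=> /allP hA /allP hB; apply/allP => x.
move=> /flattenP [X /mapP [sg sgA ->]] /flattenP [Y /mapP [tu tuB ->]].
move=> /flattenP [Z /mapP [M /lattice_path_shape [sM _] ->]].
rewrite /join_chain; case: pselect => // G; rewrite inE => /eqP -> /=.
by rewrite sM /= (eqP (hA _ sgA)) (eqP (hB _ tuB)).
Qed.

Lemma gauss_product_bd_eq A B (FA FB : seq (seq Sg)) rho :
  bd_eq A (flatten FA) -> bd_eq B (flatten FB) -> apart_chains A B ->
  odd (bdmult (gauss_product A B) rho) =
  odd (\sum_(X <- FA) mult (gauss_product X B) rho +
       \sum_(Y <- FB) mult (gauss_product A Y) rho).
Proof.
move=> bdA bdB AB.
have sumA : odd (\sum_(X <- FA) mult (gauss_product X B) rho) =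
    odd (\sum_(sg <- A) \sum_(tu <- B) \sum_(ka <- sfaces sg)
           \sum_(M <- lattice_paths (sdim ka) (sdim tu)) count_mem rho (join_chain ka tu M)).
  under eq_bigr do rewrite mult_count_mem count_gauss_product.
  rewrite -big_flatten /= (odd_sum_bd_eq _ bdA).
  by congr odd; apply: eq_bigr => sg _; exact: exchange_big.
have sumB : odd (\sum_(Y <- FB) mult (gauss_product A Y) rho) =
    odd (\sum_(sg <- A) \sum_(tu <- B) \sum_(ka <- sfaces tu)
           \sum_(M <- lattice_paths (sdim sg) (sdim ka)) count_mem rho (join_chain sg ka M)).
  under eq_bigr do rewrite mult_count_mem count_gauss_product.
  rewrite exchange_big /=; apply: odd_sum_congr => sg _.
  by rewrite -big_flatten /= (odd_sum_bd_eq _ bdB).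
rewrite oddD sumA sumB -oddD -big_split /=.
under [in RHS]eq_bigr do rewrite -big_split /=.
rewrite /bdmult big_gauss_product.
apply: odd_sum2_odd_count => sg tu _ _ sgA tuB.
exact: bdmult_join_pair (AB _ _ sgA tuB).
Qed.

Lemma antipode_mult_gauss_product A B rho :
  antipode_mult (gauss_product A B) rho = mult (gauss_product B A) rho.
Proof.
rewrite mult_count_mem count_gauss_product /antipode_mult count_sum big_gauss_product.
rewrite exchange_big /=; apply: eq_bigr => tu _; apply: eq_bigr => sg _.
rewrite (perm_big _ (lattice_paths_swap (sdim sg) (sdim tu))) big_map.
apply: eq_bigr => M _; rewrite {1}/join_chain; case: pselect => G.
  rewrite big_seq1 count_mem_join_chain; congr nat_of_bool.
  by apply/asboolP/idP => [/(is_antipode_gauss_join G rho).1 | /(is_antipode_gauss_join G rho).2].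
rewrite big_nil join_chain_nil // => /joinable_swap.
by rewrite (mapK swap_pairK).
Qed.

Lemma odd_size_gauss_product A B : homogeneous 0 A -> homogeneous 0 B ->
  apart_chains A B -> odd (size A) -> odd (size B) -> odd (size (gauss_product A B)).
Proof.
move=> /allP hA /allP hB AB oA oB; rewrite -sum1_size big_gauss_product.
rewrite (@odd_sum2_odd_count _ _ A B _ (fun _ _ => 1)).
  rewrite (eq_bigr (fun=> size B)) => [|sg _]; last by rewrite sum1_size.
  by rewrite big_const_seq count_predT iter_addn_0 oddM oB oA.
move=> sg tu sgA tuB sg_odd tu_odd; rewrite (eqP (hA _ sgA)) (eqP (hB _ tuB)).
have G : joinable sg tu [:: (0, 0)] by apply: apart_joinable => //=; exact: AB.
by rewrite big_seq1 (join_chainE G) big_seq1.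
Qed.

End ProductChain.

Theorem lemma19 (R : realType) (d : nat) (V : finType) (K : {set {set V}})
  (HK : simplicial_complex K)
  (gamma : {set V} -> seq (Sing (Rspace R d)))
  (Hgamma : homological_almost_embedding K gamma) :
  exists gt : {set V} -> {set V} -> seq (Sing (sphere R d)),
    nontrivial_equivariant_dchain_map K gt.
Proof.
move: Hgamma => [gamma_chain [gamma_odd gamma_disj]].
exists (fun s t => gauss_product (gamma s) (gamma t)).
have gamma_apart s t : dcell K s t -> apart_chains (gamma s) (gamma t).
  by move=> [sK tK st]; apply: support_apart; exact: gamma_disj.
split; [|split].
- move=> s t st; have [sK tK _] := st.
  have [hs bs] := gamma_chain s sK; have [ht bt] := gamma_chain t tK.
  split; first exact: gauss_product_homogeneous.
  move=> rho; rewrite (gauss_product_bd_eq _ bs bt (gamma_apart s t st)).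
  by rewrite mult_flatten /dfacets map_cat big_cat -!map_comp !big_map.
- move=> v w vw; have [vK wK _] := vw.
  have [hv _] := gamma_chain _ vK; have [hw _] := gamma_chain _ wK.
  rewrite /simp_dim cards1 /= in hv; rewrite /simp_dim cards1 /= in hw.
  by apply: (odd_size_gauss_product hv hw (gamma_apart _ _ vw)); apply: gamma_odd.
- by move=> s t _ rho; rewrite antipode_mult_gauss_product.
Qed.
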